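(* Let $\bar\mu,\sigma_1,\dots,\sigma_q>0$, $R_1\in\mathbb{S}^{n_1}_+,\dots,R_q\in\mathbb{S}^{n_q}_+$, $W\in\mathbb{S}^n_+$, and $Z,J\in\mathbb{R}^{m\times n}$. Define $L:=[ZW^{-1}\ \ J]\in\mathbb{R}^{m\times2n}$, $R(\tau):=\bigoplus_{i=1}^qR_ie^{\sigma_i\tau_i}$, $\widehat P(\tau):=W^{-1}\oplus R(\tau)$, $$\mathcal{L}:=\{\bar x\in\mathbb{R}^{2n}:\ |L_{(i)}\bar x|\le\bar u_i,\ i=1,\dots,m\},\qquad \mathcal{Q}_{\bar\mu}:=\{(\bar x,\tau)\in\mathbb{R}^{2n}\times\mathcal{T}:\ \bar x^{\mathsf T}\widehat P(\tau)\bar x\le\bar\mu\}.$$ Assume $$\begin{bmatrix}W&0&Z_{(i)}^{\mathsf T}\\ \star&\bigoplus_{j=1}^qR_j&J_{(i)}^{\mathsf T}\\ \star&\star&\frac{\bar u_i^2}{\bar\mu}\end{bmatrix}\succeq0\qquad\forall i\in\{1,\dots,m\}.$$ Then $\mathcal{Q}_{\bar\mu}\subset\mathcal{L}\times\mathcal{T}$.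
   Context: Integers $n,m\ge1$, $1\le q\le n$, $n_1,\dots,n_q\ge1$ with $\sum n_i=n$; $\bar u=(\bar u_1,\dots,\bar u_m)$ with $\bar u_i>0$; positive reals $T_2^{(1)},\dots,T_2^{(q)}$ and $\mathcal{T}=\prod_i[0,T_2^{(i)}]$. Notation: $\mathbb{S}^k_+$ symmetric positive definite $k\times k$ matrices; $\bigoplus$ block-diagonal direct sum; $\star$ symmetric blocks; $M_{(i)}$ the $i$-th row of $M$. *)

From HB Require Import structures.
From mathcomp Require Import all_boot all_order all_algebra.
From mathcomp Require Import all_classical all_reals all_analysis.
Set Implicit Arguments. Unset Strict Implicit. Unset Printing Implicit Defensive.
Import Order.TTheory GRing.Theory Num.Theory.
Local Open Scope ring_scope.

Definition posdef (R : realType) (k : nat) (M : 'M[R]_k) : Prop :=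
  M^T = M /\ forall x : 'cV[R]_k, x != 0 -> 0 < (x^T *m M *m x) 0 0.

Definition psd (R : realType) (k : nat) (M : 'M[R]_k) : Prop :=
  M^T = M /\ forall x : 'cV[R]_k, 0 <= (x^T *m M *m x) 0 0.

Definition Rtau (R : realType) (q : nat) (n_ : 'I_q -> nat)
  (Rb : forall i : 'I_q, 'M[R]_(n_ i)) (sigma tau : 'I_q -> R)
  : 'M[R]_(\sum_(i < q) n_ i) :=
  \mxdiag_(i < q) (expR (sigma i * tau i) *: Rb i).

Definition Phat (R : realType) (q : nat) (n_ : 'I_q -> nat)
  (W : 'M[R]_(\sum_(i < q) n_ i))
  (Rb : forall i : 'I_q, 'M[R]_(n_ i)) (sigma tau : 'I_q -> R)
  : 'M[R]_(\sum_(i < q) n_ i + \sum_(i < q) n_ i) :=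
  block_mx (invmx W) 0 0 (Rtau Rb sigma tau).

Definition Lmx (R : realType) (m n : nat) (W : 'M[R]_n) (Z J : 'M[R]_(m, n))
  : 'M[R]_(m, n + n) := row_mx (Z *m invmx W) J.

Definition lmi_mx (R : realType) (q m : nat) (n_ : 'I_q -> nat)
  (W : 'M[R]_(\sum_(i < q) n_ i)) (Rb : forall i : 'I_q, 'M[R]_(n_ i))
  (Z J : 'M[R]_(m, \sum_(i < q) n_ i)) (ubar : 'I_m -> R) (mu : R) (i : 'I_m)
  : 'M[R]_(\sum_(j < q) n_ j + \sum_(j < q) n_ j + 1) :=
  block_mx (block_mx W 0 0 (\mxdiag_(j < q) Rb j))
           (col_mx (row i Z)^T (row i J)^T)
           (row_mx (row i Z) (row i J))
           ((ubar i ^+ 2 / mu)%:M).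

(* Split x = (x1, x2).  With y := W^-1 x1 we have
   L_(i) x = Z_(i) y + J_(i) x2 =: s.  Evaluating the i-th LMI at (y, x2, t)
   gives a quadratic in t that is nonnegative for every t, so its discriminant
   yields s^2 <= (y^T W y + x2^T (\bigoplus_j R_j) x2) ubar_i^2 / mu.
   As tau >= 0 and sigma > 0, every weight exp(sigma_j tau_j) is at least 1,
   hence the bracket is at most x^T Phat(tau) x <= mu, and |s| <= ubar_i. *)
From HB Require Import structures.
From mathcomp Require Import all_boot all_order all_algebra.
From mathcomp Require Import all_classical all_reals all_analysis.
From mathcomp Require Import ring lra.
Set Implicit Arguments. Unset Strict Implicit. Unset Printing Implicit Defensive.
Import Order.TTheory GRing.Theory Num.Theory.
Local Open Scope ring_scope.

Definition qform (R : comPzRingType) k (M : 'M[R]_k) (x : 'cV[R]_k) : R :=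
  (x^T *m M *m x) 0 0.

Lemma sqr_le_mul_of_quadratic_ge0 (R : realFieldType) (a b c : R) :
  0 < c -> (forall t, 0 <= a + 2 * t * b + t ^+ 2 * c) -> b ^+ 2 <= a * c.
Proof.
move=> c_gt0 /(_ (- b / c)).
have -> : a + 2 * (- b / c) * b + (- b / c) ^+ 2 * c = (a * c - b ^+ 2) / c.
  by field; rewrite gt_eqF.
by rewrite pmulr_lge0 ?invr_gt0 // subr_ge0.
Qed.

Lemma norm_le_of_sqr_le (R : realDomainType) (s u : R) :
  0 <= u -> s ^+ 2 <= u ^+ 2 -> `|s| <= u.
Proof. by move=> u_ge0 le_su; rewrite ler_norml; apply/andP; split; nra. Qed.

Lemma posdef_unitmx (R : realType) k (M : 'M[R]_k) : posdef M -> M \in unitmx.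
Proof.
move=> [_ M_pos]; rewrite -row_free_unit -kermx_eq0.
apply/eqP/row_matrixP => i; rewrite row0.
set u := row i (kermx M).
have uM0 : u *m M = 0 by rewrite /u -row_mul mulmx_ker row0.
apply/eqP; apply: contraT => u_neq0.
have /M_pos : u^T != 0 by rewrite trmx_eq0.
by rewrite trmxK uM0 mul0mx mxE ltxx.
Qed.

Lemma posdef_qform_ge0 (R : realType) k (M : 'M[R]_k) x :
  posdef M -> 0 <= qform M x.
Proof.
move=> [_ M_pos]; have [->|x_neq0] := eqVneq x 0; first by rewrite /qform mulmx0 mxE.
exact/ltW/M_pos.
Qed.

Lemma qform_invmx (R : comUnitRingType) k (W : 'M[R]_k) x :
  W^T = W -> W \in unitmx -> qform W (invmx W *m x) = qform (invmx W) x.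
Proof.
move=> W_sym W_unit; rewrite /qform trmx_mul trmx_inv W_sym.
by rewrite -!mulmxA (mulmxA W) mulmxV // mul1mx mulmxA.
Qed.

Lemma qform_block_diag (R : comPzRingType) k1 k2 (A : 'M[R]_k1) (D : 'M[R]_k2) y1 y2 :
  qform (block_mx A 0 0 D) (col_mx y1 y2) = qform A y1 + qform D y2.
Proof.
rewrite /qform tr_col_mx mul_row_block !mulmx0 addr0 add0r mul_row_col.
by rewrite mxE.
Qed.

Lemma qform_mxdiag (R : comPzRingType) q (p_ : 'I_q -> nat)
  (D : forall i, 'M[R]_(p_ i)) (x : 'cV[R]_(\sum_i p_ i)) :
  qform (\mxdiag_i D i) x = \sum_i qform (D i) (submxcol x i).
Proof.
rewrite /qform -{1 2}[x]submxcolK tr_mxcol mul_mxrow_mxdiag mul_mxrow_mxcol.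
by rewrite summxE.
Qed.

Lemma qform_mxdiag_le_scale (R : realType) q (p_ : 'I_q -> nat)
  (D : forall i, 'M[R]_(p_ i)) (e : 'I_q -> R) (x : 'cV[R]_(\sum_i p_ i)) :
  (forall i, posdef (D i)) -> (forall i, 1 <= e i) ->
  qform (\mxdiag_i D i) x <= qform (\mxdiag_i (e i *: D i)) x.
Proof.
move=> D_pos e_ge1; rewrite !qform_mxdiag; apply: ler_sum => i _.
have := posdef_qform_ge0 (submxcol x i) (D_pos i).
rewrite /qform -scalemxAr -scalemxAl => qD_ge0; rewrite [X in _ <= X]mxE.
by have := e_ge1 i; nra.
Qed.

Lemma qform_bordered (R : comPzRingType) k (A : 'M[R]_k) (b : 'cV[R]_k) (c t : R) y :
  qform (block_mx A b b^T c%:M) (col_mx y t%:M)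
  = qform A y + 2 * t * (b^T *m y) 0 0 + t ^+ 2 * c.
Proof.
rewrite /qform tr_col_mx tr_scalar_mx mul_row_block mul_row_col.
rewrite !mul_scalar_mx !mul_mx_scalar mulmxDl -scalemxAl.
have -> : y^T *m b = b^T *m y.
  by rewrite [LHS]mx11_scalar -tr_scalar_mx -mx11_scalar trmx_mul trmxK.
rewrite !mxE eqxx /=; ring.
Qed.

Lemma psd_bordered_sqr_le (R : realType) k (A : 'M[R]_k) (b : 'cV[R]_k) (c : R) y :
  psd (block_mx A b b^T c%:M) -> 0 < c -> (b^T *m y) 0 0 ^+ 2 <= qform A y * c.
Proof.
move=> [_ psd_ge0] c_gt0; apply: sqr_le_mul_of_quadratic_ge0 => // t.
by rewrite -qform_bordered; apply: psd_ge0.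
Qed.

Theorem lemma3 (R : realType) (q m : nat) (n_ : 'I_q -> nat)
  (ubar : 'I_m -> R) (T2 : 'I_q -> R)
  (mu : R) (sigma : 'I_q -> R)
  (Rb : forall i : 'I_q, 'M[R]_(n_ i))
  (W : 'M[R]_(\sum_(i < q) n_ i)) (Z J : 'M[R]_(m, \sum_(i < q) n_ i)) :
  (1 <= m)%N -> (1 <= q)%N -> (q <= \sum_(i < q) n_ i)%N ->
  (forall i, (1 <= n_ i)%N) ->
  (forall i, 0 < ubar i) -> (forall i, 0 < T2 i) ->
  0 < mu -> (forall i, 0 < sigma i) ->
  (forall i, posdef (Rb i)) -> posdef W ->
  (forall i : 'I_m, psd (lmi_mx W Rb Z J ubar mu i)) ->
  forall (x : 'cV[R]_(\sum_(i < q) n_ i + \sum_(i < q) n_ i)) (tau : 'I_q -> R),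
    (forall j, 0 <= tau j <= T2 j) ->
    (x^T *m Phat W Rb sigma tau *m x) 0 0 <= mu ->
    (forall i : 'I_m, `|(row i (Lmx W Z J) *m x) 0 0| <= ubar i) /\
    (forall j, 0 <= tau j <= T2 j).
Proof.
move=> _ _ _ _ ubar_gt0 _ mu_gt0 sigma_gt0 Rb_pos W_pos lmi_psd x tau tau_T2 xPx_le.
split=> // i; rewrite -[x]vsubmxK in xPx_le *.
move: (usubmx x) (dsubmx x) xPx_le => x1 x2 xPx_le.
set y := col_mx (invmx W *m x1) x2.
set b := col_mx (row i Z)^T (row i J)^T.
have -> : row i (Lmx W Z J) *m col_mx x1 x2 = b^T *m y.
  by rewrite tr_col_mx !trmxK /Lmx row_row_mx row_mul !mul_row_col mulmxA.
have qy_le : qform (block_mx W 0 0 (\mxdiag_j Rb j)) y <= mu.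
  apply: le_trans xPx_le; rewrite [X in _ <= X]qform_block_diag qform_block_diag.
  rewrite qform_invmx ?W_pos.1 ?posdef_unitmx // lerD2l.
  apply: qform_mxdiag_le_scale => // j; apply: le_trans (expR_ge1Dx _).
  by rewrite lerDl; apply: mulr_ge0; [exact/ltW | case/andP: (tau_T2 j)].
have c_gt0 : 0 < ubar i ^+ 2 / mu by rewrite divr_gt0 ?exprn_gt0.
have := lmi_psd i; rewrite /lmi_mx -[row_mx _ _]trmxK tr_row_mx.
move=> /(psd_bordered_sqr_le y) /(_ c_gt0) s_sqr_le.
apply: norm_le_of_sqr_le; first exact: ltW.
apply: le_trans s_sqr_le _.
by rewrite mulrA ler_pdivrMr // [leRHS]mulrC ler_pM2r // exprn_gt0.
Qed.
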